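(* For integers $0\le\ell\le2n$ and $m$, let $q_{\ell,m,2n}$ be the weighted number of paths in the class $\mathcal{C}$ from $(\ell,m)$ to $(2n,0)$. Then \[ \frac{q_{\ell,j,2n}}{j+1}\ge\frac{q_{\ell,k,2n}}{k+1} \] for all integers $0\le j<k\le\ell\le2n$ with $k-j$ even and $n\ge10$.
   Context: The class $\mathcal{C}$ consists of lattice paths with steps in $\{(1,1),(1,-1),(2,-2),(3,-1),(3,1)\}$ never going below $y=0$, weighted as follows: a step ending at the point $(a,b)$ has weight $\frac{a-b+2}{a+b}$ if it is $(1,1)$, $\frac{a-b-2}{a-b}$ if it is $(1,-1)$, $\frac{2}{a-b}$ if it is $(2,-2)$, $\frac{2}{a+b}$ if it is $(3,-1)$, and $\frac{4}{(a+b)(a+b-2)}$ if it is $(3,1)$; the weight of a path is the product of its step weights. Equivalently, $q_{\ell,m,2n}=0$ if $m<0$ or $\ell>2n$, $q_{2n,m,2n}=\delta_{m,0}$, and for $\ell<2n$, $m\ge0$: \[ q_{\ell,m,2n}=\tfrac{\ell-m}{\ell-m+2}q_{\ell+1,m-1,2n}+\tfrac{\ell-m+2}{\ell+m+2}q_{\ell+1,m+1,2n}+\tfrac{2}{\ell-m+4}q_{\ell+2,m-2,2n}+\tfrac{2}{\ell+m+2}q_{\ell+3,m-1,2n}+\tfrac{4}{(\ell+m+4)(\ell+m+2)}q_{\ell+3,m+1,2n}. \] *)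

From mathcomp Require Import all_boot all_order all_algebra.
Set Implicit Arguments. Unset Strict Implicit. Unset Printing Implicit Defensive.
Import Order.TTheory GRing.Theory Num.Theory.
Local Open Scope ring_scope.

(* qaux N d m = q_{N-d, m, N}  (d = distance to the end abscissa N). *)
Fixpoint qaux (N : nat) (d : nat) (m : int) {struct d} : rat :=
  match d with
  | 0%N => if m == 0 then 1 else 0
  | d1.+1 =>
      if m < 0 then 0 else
      let l : rat := (N - d)%N%:R in
      let M : rat := m%:~R in
      let q1 := fun m' => qaux N d1 m' in
      let q2 := fun m' => match d1 with 0%N => 0 | d2.+1 => qaux N d2 m' end in
      let q3 := fun m' => match d1 with
                          | 0%N => 0 | 1%N => 0
                          | d3.+2 => qaux N d3 m' end in
      (l - M) / (l - M + 2) * q1 (m - 1)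
      + (l - M + 2) / (l + M + 2) * q1 (m + 1)
      + 2 / (l - M + 4) * q2 (m - 2)
      + 2 / (l + M + 2) * q3 (m - 1)
      + 4 / ((l + M + 4) * (l + M + 2)) * q3 (m + 1)
  end.

Definition q (l : nat) (m : int) (N : nat) : rat :=
  if (N < l)%N then 0 else if m < 0 then 0 else qaux N (N - l) m.

(* Write r(l, m) = q(l, m) / (m + 1).  We show r(l, m + 2) <= r(l, m) by
   descending induction on l, for all m at once; iterating it gives the theorem.  Expanding q(l, m + 2) and q(l, m)
   by the recursion, the values one, two and three levels down are compared
   with the induction hypothesis.  What is left on q(l+1, m+1) is pushed down
   through the recursion of q(l+1, m+1), and what is then left on q(l+2, m)
   through the recursion of q(l+2, m); at the end a nonnegative multiple of
   q(l+3, m+1) remains.  All coefficients involved are rational functions of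
   l and m whose numerators have nonnegative coefficients as polynomials in
   l - m - 2 and m. *)

From mathcomp Require Import all_boot all_order all_algebra.
From mathcomp Require Import ring lra zify.
Set Implicit Arguments. Unset Strict Implicit. Unset Printing Implicit Defensive.
Import Order.TTheory GRing.Theory Num.Theory.
Local Open Scope ring_scope.

Lemma down_ind3 N (P : nat -> Prop) :
  (forall l, (N <= l)%N -> P l) ->
  (forall l, (l < N)%N -> P l.+1 -> P l.+2 -> P l.+3 -> P l) ->
  forall l, P l.
Proof.
move=> Pbig Pstep l; elim: (N - l)%N.+1 {-2}l (ltnSn (N - l)) => // k IH {}l hk.
case: (leqP N l) => [/Pbig // | hl].
by apply: Pstep => //; apply: IH; lia.
Qed.

Definition step_comb (R : fieldType) (L M x1 x2 y z1 z2 : R) : R :=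
  (L - M) / (L - M + 2) * x1 + (L - M + 2) / (L + M + 2) * x2
  + 2 / (L - M + 4) * y + 2 / (L + M + 2) * z1
  + 4 / ((L + M + 4) * (L + M + 2)) * z2.

Lemma step_comb0 (R : fieldType) (L M : R) : step_comb L M 0 0 0 0 0 = 0.
Proof. by rewrite /step_comb !mulr0 !addr0. Qed.

Lemma ler_step_comb (R : realFieldType) (L M x1 x2 y z1 z2 x1' x2' y' z1' z2' : R) :
  0 <= M -> M <= L ->
  x1 <= x1' -> x2 <= x2' -> y <= y' -> z1 <= z1' -> z2 <= z2' ->
  step_comb L M x1 x2 y z1 z2 <= step_comb L M x1' x2' y' z1' z2'.
Proof.
move=> hM hML *.
by rewrite !lerD // ler_wpM2l // ?divr_ge0 ?mulr_ge0 //; lra.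
Qed.

Lemma monomial_ge0 (R : realDomainType) (a b : R) i j :
  0 <= a -> 0 <= b -> 0 <= a ^+ i * b ^+ j.
Proof. by move=> ha hb; rewrite mulr_ge0 ?exprn_ge0. Qed.

(* Given all the monomials a^i b^j (i <= p, j <= q) as nonnegative atoms, lra
   proves any polynomial in a, b with nonnegative coefficients nonnegative. *)
Ltac add_monomials_ge0 a b ha hb p q :=
  let rec go i j :=
    lazymatch j with
    | S ?j' => have := @monomial_ge0 _ a b i j ha hb; go i j'
    | O => have := @monomial_ge0 _ a b i 0%N ha hb;
           lazymatch i with S ?i' => go i' q | O => idtac end
    end in
  go p q.

Section Certificate.
Variable R : realFieldType.
Implicit Types L M : R.

Definition numX L M : R :=
  (M + 3) * ((L - M) ^+ 2 * M * (L + M + 2) * (L + M + 4)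
             + (L - M) * (L - M + 2) ^+ 2 * (M + 2) * (L + M + 4))
  - (M + 1) * ((L - M - 2) * (L - M + 2) * (M + 2) * (L + M + 2) * (L + M + 4)
               + (L - M) ^+ 2 * (L - M + 2) * (M + 4) * (L + M + 2)).

Definition numY L M : R :=
  2 * (M + 3) * M * (M - 1) * (L - M + 2) ^+ 2 * (M + 2) * (L + M + 2) * (L + M + 4)
  - 2 * (M + 1) ^+ 3 * (L - M + 2) * (L - M + 4) * (M + 2) * (L + M + 2) * (L + M + 4)
  + numX L M * (L - M + 4) * (M + 1) ^+ 2.

Definition numZ L M : R :=
  ((M + 3) * (2 * M * (L + M + 4) * (L + M + 6) + 4 * (M + 2) * (L + M + 6))
   - (M + 1) * (2 * (M + 2) * (L + M + 2) * (L + M + 6) + 4 * (M + 4) * (L + M + 2)))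
    * (L - M) * (L - M + 2) ^+ 2 * (L - M + 4) * (M + 1) ^+ 2 * (M + 2) * (L + M + 4)
  + 2 * M * numX L M * (L - M + 2) * (M + 1) ^+ 2 * (L + M + 4) * (L + M + 6)
  + numY L M * (L - M) * (L - M + 4) * (M + 2) * (L + M + 6).

Lemma numX_ge0 a M : 0 <= a -> 0 <= M -> 0 <= numX (a + M + 2) M.
Proof. by move=> ha hM; rewrite /numX; add_monomials_ge0 a M ha hM 3%N 4%N; lra. Qed.

Lemma numY_ge0 a M : 0 <= a -> 0 <= M -> 0 <= numY (a + M + 2) M.
Proof.
by move=> ha hM; rewrite /numY /numX; add_monomials_ge0 a M ha hM 4%N 6%N; lra.
Qed.

Lemma numZ_ge0 a M : 0 <= a -> 0 <= M -> 0 <= numZ (a + M + 2) M.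
Proof.
by move=> ha hM; rewrite /numZ /numY /numX; add_monomials_ge0 a M ha hM 7%N 9%N; lra.
Qed.

(* In the notation of [step_comb_ratio], [coefX] is what is left on X1 once X0
   and X3 are bounded by X1; [coefY] is what is left on Y2 once [coefX] X1 is
   bounded below through the recursion of X1; [coefZ] is what is left on Z1
   once [coefY] Y2 is bounded below through the recursion of Y2. *)
Definition coefX L M : R := numX L M /
  ((L - M) * (L - M + 2) * (M + 2) * (L + M + 2) * (L + M + 4)).

Definition coefY L M : R := numY L M /
  ((L - M + 2) ^+ 2 * (L - M + 4) * (M + 1) ^+ 2 * (M + 2) * (L + M + 2) * (L + M + 4)).

Definition coefZ L M : R := numZ L M /
  ((L - M) * (L - M + 2) ^+ 2 * (L - M + 4) * (M + 1) ^+ 2 * (M + 2) ^+ 2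
   * (L + M + 2) * (L + M + 4) ^+ 2 * (L + M + 6)).

Ltac nonneg := lazymatch goal with
  | |- is_true (0 <= _ * _) => apply: mulr_ge0; nonneg
  | |- is_true (0 <= _ ^-1) => rewrite invr_ge0; nonneg
  | |- is_true (0 <= _ ^+ _) => apply: exprn_ge0; nonneg
  | |- is_true (0 <= _ + _) => first [lra | apply: addr_ge0; nonneg]
  | |- _ => lra
  end.

Lemma coef_ge0 L M : 0 <= M -> 2 <= L - M ->
  [/\ 0 <= coefX L M, 0 <= coefY L M & 0 <= coefZ L M].
Proof.
move=> hM hLM; have [a ha ->] : exists2 a, 0 <= a & L = a + M + 2.
  by exists (L - M - 2); [lra | ring].
have := numX_ge0 ha hM; have := numY_ge0 ha hM; have := numZ_ge0 ha hM.
by rewrite /coefX /coefY /coefZ; split; nonneg.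
Qed.

Lemma step_comb_ratio_identity L M X0 X1 X3 Y0 Y2 Z0 Z1 Z3 :
  0 <= M -> 2 <= L - M ->
  (M + 3) * step_comb L M X0 X1 Y0 Z0 Z1 - (M + 1) * step_comb L (M + 2) X1 X3 Y2 Z1 Z3
  = (M + 3) * (L - M) / ((L - M + 2) * (M + 2)) * ((M + 2) * X0 - M * X1)
  + (M + 1) * (L - M) / ((L + M + 4) * (M + 2)) * ((M + 4) * X1 - (M + 2) * X3)
  + 2 * (M + 3) / ((L - M + 4) * (M + 1) ^+ 2) * ((M + 1) ^+ 2 * Y0 - M * (M - 1) * Y2)
  + (2 * (M + 3) / (L + M + 2) + 2 * coefX L M / (L - M + 4)) / (M + 2)
      * ((M + 2) * Z0 - M * Z1)
  + 4 * (M + 1) / ((L + M + 6) * (L + M + 4) * (M + 2)) * ((M + 4) * Z1 - (M + 2) * Z3)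
  + coefX L M * (X1 - step_comb (L + 1) (M + 1) Y2 0 Z0 0 0)
  + coefY L M * (Y2 - step_comb (L + 2) M 0 Z1 0 0 0)
  + coefZ L M * Z1.
Proof.
move=> hM hLM; rewrite /step_comb /coefX /coefY /coefZ /numZ /numY /numX.
by field; rewrite ?mulf_eq0 ?negb_or; repeat (apply/andP; split); apply/lt0r_neq0; lra.
Qed.

(* X_i, Y_i, Z_i stand for q(l+1, m-1+i), q(l+2, m-2+i), q(l+3, m-1+i), with
   L = l and M = m.  The hypothesis on Y is (M - 1) Y2 <= (M + 1) Y0 weakened by
   the factor M / (M + 1): at M = 0 it then says 0 <= Y0 instead of
   -Y2 <= Y0, which is what makes one certificate work for every M >= 0. *)
Lemma step_comb_ratio L M X0 X1 X3 Y0 Y2 Z0 Z1 Z3 :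
  0 <= M -> 2 <= L - M -> 0 <= Z1 ->
  M * X1 <= (M + 2) * X0 -> (M + 2) * X3 <= (M + 4) * X1 ->
  M * (M - 1) * Y2 <= (M + 1) ^+ 2 * Y0 ->
  M * Z1 <= (M + 2) * Z0 -> (M + 2) * Z3 <= (M + 4) * Z1 ->
  step_comb (L + 1) (M + 1) Y2 0 Z0 0 0 <= X1 -> step_comb (L + 2) M 0 Z1 0 0 0 <= Y2 ->
  (M + 1) * step_comb L (M + 2) X1 X3 Y2 Z1 Z3 <= (M + 3) * step_comb L M X0 X1 Y0 Z0 Z1.
Proof.
move=> hM hLM hZ1 *; have [hX hY hZ] := coef_ge0 hM hLM.
rewrite -subr_ge0 step_comb_ratio_identity //.
repeat apply: addr_ge0; (apply: mulr_ge0; [clear -hM hLM hX hY hZ; nonneg | idtac]).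
all: lra.
Qed.

End Certificate.

Lemma qaux_neg N d m : m < 0 -> qaux N d m = 0.
Proof. by case: d => [|d] /= hm; [case: eqP hm => // -> | rewrite hm]. Qed.

Lemma q_neg l m N : m < 0 -> q l m N = 0.
Proof. by move=> hm; rewrite /q hm if_same. Qed.

Lemma q_gt l m N : (N < l)%N -> q l m N = 0.
Proof. by rewrite /q => ->. Qed.

Lemma q_end m N : q N m N = (m == 0)%:R.
Proof.
rewrite /q ltnn subnn /=.
by case: ltrP => [/lt_eqF -> | _] //; case: (m == 0).
Qed.

Lemma q_rec l m N : (l < N)%N -> 0 <= m ->
  q l m N = step_comb l%:R m%:~R (q l.+1 (m - 1) N) (q l.+1 (m + 1) N)
              (q l.+2 (m - 2) N) (q l.+3 (m - 1) N) (q l.+3 (m + 1) N).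
Proof.
move=> hl hm.
have qE l' m' : (l' <= N)%N -> q l' m' N = qaux N (N - l') m'.
  by move=> hl'; rewrite /q ltnNge hl' /=; case: ltrP => // /qaux_neg ->.
have q1E m' : qaux N (N - l.+1) m' = q l.+1 m' N by rewrite qE.
have q2E m' : match (N - l.+1)%N with 0%N => 0 | d.+1 => qaux N d m' end = q l.+2 m' N.
  case E: (N - l.+1)%N => [|d]; first by rewrite q_gt //; lia.
  by rewrite qE; [congr qaux; lia | lia].
have q3E m' : match (N - l.+1)%N with 0%N | 1%N => 0 | d.+2 => qaux N d m' end
              = q l.+3 m' N.
  case E: (N - l.+1)%N => [|[|d]]; try by rewrite q_gt //; lia.
  by rewrite qE; [congr qaux; lia | lia].
rewrite qE ?(ltnW hl) // -(subnSK hl) [qaux _ _.+1 _]/= ltNge hm /=.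
rewrite (_ : (N - (N - l.+1).+1)%N = l); last by lia.
by rewrite !q1E !q2E !q3E.
Qed.

Lemma q_ge0 l m N : m <= l%:Z -> 0 <= q l m N.
Proof.
elim/(@down_ind3 N): l m => [l hNl | l hl IH1 IH2 IH3] m hml.
  case: (ltngtP N l) hNl => // [hl _ | -> _]; first by rewrite q_gt.
  by rewrite q_end ler0n.
case: (ltrP m 0) => hm; first by rewrite q_neg.
rewrite q_rec // -(step_comb0 l%:R m%:~R).
apply: ler_step_comb; rewrite ?ler0z ?IH1 ?IH2 ?IH3 //; try lia.
by rewrite -[l%:R]/((l%:Z)%:~R) ler_int.
Qed.

Lemma q_ge_step_comb l m N (L M x1 x2 y z1 z2 : rat) :
  L = l%:R -> M = m%:~R -> 0 <= m -> m <= l%:Z ->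
  x1 <= q l.+1 (m - 1) N -> x2 <= q l.+1 (m + 1) N -> y <= q l.+2 (m - 2) N ->
  z1 <= q l.+3 (m - 1) N -> z2 <= q l.+3 (m + 1) N ->
  step_comb L M x1 x2 y z1 z2 <= q l m N.
Proof.
move=> -> -> hm hml h1 h2 h3 h4 h5.
have hML : m%:~R <= l%:R :> rat by rewrite -[l%:R]/((l%:Z)%:~R) ler_int.
case: (ltnP l N) => hl; first by rewrite q_rec //; apply: ler_step_comb; rewrite ?ler0z.
have q0 l' m' : (l < l')%N -> q l' m' N = 0 by move=> ?; rewrite q_gt //; lia.
rewrite !q0 in h1 h2 h3 h4 h5; try lia.
apply: le_trans (_ : _ <= step_comb l%:R m%:~R 0 0 0 0 0) _.
  by apply: ler_step_comb; rewrite ?ler0z.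
by rewrite step_comb0 q_ge0.
Qed.

Definition ratio_dec N l := forall m : int, m + 2 <= l%:Z ->
  (m%:~R + 1) * q l (m + 2) N <= (m%:~R + 3) * q l m N.

Lemma ratio_dec_neg N l m : m < 0 -> m + 2 <= l%:Z ->
  (m%:~R + 1) * q l (m + 2) N <= (m%:~R + 3) * q l m N.
Proof.
move=> hm hml; rewrite [q l m N]q_neg // mulr0.
have hm1 : m%:~R + 1 <= 0 :> rat.
  have : (m + 1)%:~R <= 0 :> rat by rewrite lerz0; lia.
  lra.
by rewrite mulr_le0_ge0 ?q_ge0.
Qed.

Lemma ratio_dec_end N l : (N <= l)%N -> ratio_dec N l.
Proof.
move=> hNl m hml; case: (ltrP m 0) => hm; first exact: ratio_dec_neg.
have -> : q l (m + 2) N = 0.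
  case: (ltngtP N l) hNl => // [hl _ | <- _]; first by rewrite q_gt.
  by rewrite q_end (_ : m + 2 == 0 = false) //; lia.
have hm3 : 0 <= m%:~R + 3 :> rat.
  have : 0 <= m%:~R :> rat by rewrite ler0z.
  lra.
by rewrite mulr0 mulr_ge0 // q_ge0 //; lia.
Qed.

Lemma ratio_dec_step N l : (l < N)%N ->
  ratio_dec N l.+1 -> ratio_dec N l.+2 -> ratio_dec N l.+3 -> ratio_dec N l.
Proof.
move=> hl IH1 IH2 IH3 m hml; case: (ltrP m 0) => hm; first exact: ratio_dec_neg.
have dec l' m' m'' : ratio_dec N l' -> m'' = m' + 2 -> m'' <= l'%:Z ->
    (m'%:~R + 1) * q l' m'' N <= (m'%:~R + 3) * q l' m' N.
  by move=> IH ->; apply: IH.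
have hLM : 2 <= l%:R - m%:~R :> rat.
  have : (m + 2)%:~R <= (l%:Z)%:~R :> rat by rewrite ler_int.
  lra.
rewrite [q l (m + 2) N]q_rec // ?[q l m N]q_rec //; last by lia.
have -> : m + 2 - 1 = m + 1 by ring.
have -> : m + 2 + 1 = m + 3 by ring.
have -> : m + 2 - 2 = m by ring.
rewrite [(m + 2)%:~R]intrD.
apply: step_comb_ratio => //.
- by rewrite ler0z.
- by rewrite q_ge0 //; lia.
- by have := dec l.+1 (m - 1) (m + 1) IH1 ltac:(ring) ltac:(lia); lra.
- by have := dec l.+1 (m + 1) (m + 3) IH1 ltac:(ring) ltac:(lia); lra.
- have := dec l.+2 (m - 2) m IH2 ltac:(ring) ltac:(lia).
  have : 0 <= q l.+2 (m - 2) N by rewrite q_ge0 //; lia.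
  have : 0 <= m%:~R :> rat by rewrite ler0z.
  nra.
- by have := dec l.+3 (m - 1) (m + 1) IH3 ltac:(ring) ltac:(lia); lra.
- by have := dec l.+3 (m + 1) (m + 3) IH3 ltac:(ring) ltac:(lia); lra.
- apply: (q_ge_step_comb (l := l.+1) (m := m + 1)); rewrite ?q_ge0 ?addrK //; try lia.
  + by ring.
  + by ring.
  + by rewrite (_ : m + 1 - 2 = m - 1) //; ring.
- apply: (q_ge_step_comb (l := l.+2) (m := m)); rewrite ?q_ge0 //; try lia.
  by ring.
Qed.

Lemma q_ratio_dec N l : ratio_dec N l.
Proof. by elim/(@down_ind3 N): l => [l /ratio_dec_end | l /ratio_dec_step]. Qed.

Lemma q_ratio_le l m N : (m.+2 <= l)%N ->
  q l m.+2%:Z N / m.+3%:R <= q l m%:Z N / m.+1%:R.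
Proof.
move=> hml; have := @q_ratio_dec N l m ltac:(lia).
rewrite (_ : m%:Z + 2 = m.+2%:Z); last by lia.
rewrite ler_pdivrMr // mulrAC ler_pdivlMr //.
lra.
Qed.

Lemma q_ratio_le_even l j t N : (j + t.*2 <= l)%N ->
  q l (j + t.*2)%:Z N / (j + t.*2).+1%:R <= q l j%:Z N / j.+1%:R.
Proof.
elim: t => [|t IH] h; first by rewrite addn0.
apply: le_trans (IH _); last by rewrite doubleS in h; lia.
by rewrite doubleS !addnS q_ratio_le // -addnS -addnS -doubleS.
Qed.

Theorem lemma5p4 (n l j k : nat) :
  (10 <= n)%N -> (j < k)%N -> (k <= l)%N -> (l <= n.*2)%N -> ~~ odd (k - j) ->
  q l k%:Z n.*2 / (k.+1)%:R <= q l j%:Z n.*2 / (j.+1)%:R.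
Proof.
move=> _ hjk hkl _ hev.
have ek : k = (j + (k - j)./2.*2)%N.
  by have := odd_double_half (k - j); rewrite (negbTE hev) add0n => ->; rewrite subnKC // ltnW.
by rewrite ek q_ratio_le_even // -ek.
Qed.
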